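(* Let $G$ be a compact graph in $\mathbb{R}^d$, $C$ a finite $\epsilon$-sample of $G$, $k\ge1$, and suppose $\psi:\mathrm{DS}_k(G)\to\mathrm{DS}_k(C)$ is a bijection of multisets with $\|q-\psi(q)\|_\infty\le\epsilon$ for all $q\in\mathrm{DS}_k(G)$. If $|\mathrm{vgap}_{k,l}(G)|-|\mathrm{vgap}_{k,l+1}(G)|>4\epsilon$ for some $l\ge1$, then $\psi$ restricts to a bijection $\mathrm{VS}_{k,l}(G)\to\mathrm{VS}_{k,l}(C)$.
   Context: Offsets $X^\alpha$: union of closed radius-$\alpha$ balls centred at points of $X$. $C$ is an $\epsilon$-sample of $G$ if $C\subseteq G^\epsilon$ and $G\subseteq C^\epsilon$. $\mathrm{PD}\{X^\alpha\}$: 1-dimensional $\mathbb{Z}_2$ persistence diagram of $\{X^\alpha\}$, dots $(x,y)=$(birth, death) with multiplicity; off-diagonal part finite. Diagonal gaps: with $0<a_1<\dots<a_n$ the distinct values of $y-x$ over off-diagonal dots and $a_0=0$, gaps are $\{a_{j-1}<y-x<a_j\}$, ranked by width with lower gaps winning ties; $\mathrm{DS}_k$ is the multiset of dots above the lowest of the $k$ widest gaps. Vertical gaps of $\mathrm{DS}_k$: with $c_1<\dots<c_r$ the distinct birth coordinates of dots in $\mathrm{DS}_k$, vertical gaps are $\{c_j<x<c_{j+1}\}$ of width $c_{j+1}-c_j$ and $\{x>c_r\}$ of width $+\infty$; ranked by width with the leftmost winning ties; $\mathrm{vgap}_{k,l}$ is the $l$-th widest (width $0$ if it does not exist). $\mathrm{VS}_{k,l}$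 is the multiset of dots of $\mathrm{DS}_k$ with $x\le a$, where $\{a<x<b\}$ is the leftmost of $\mathrm{vgap}_{k,1},\dots,\mathrm{vgap}_{k,l}$. Notation with argument $X$ refers to $\mathrm{PD}\{X^\alpha\}$; $\|\cdot\|_\infty$ is the max-coordinate distance on $\mathbb{R}^2$. *)

From HB Require Import structures.
From mathcomp Require Import all_boot all_order all_algebra.
Set Implicit Arguments. Unset Strict Implicit. Unset Printing Implicit Defensive.
Import Order.TTheory GRing.Theory Num.Theory.
Local Open Scope ring_scope.

Section PD.
Variable R : realFieldType.

(* A dot (birth, death). A (1-dim) persistence diagram is represented by the
   finite list (with multiplicity) of its off-diagonal dots. *)
Definition dot := (R * R)%type.

Definition offdiag (D : seq dot) : bool := all (fun p : dot => p.1 < p.2) D.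

Definition dinf (p q : dot) : R := Num.max `|p.1 - q.1| `|p.2 - q.2|.

(* a_1 < ... < a_n : distinct values of y - x, stored 0-based *)
Definition avals (D : seq dot) : seq R :=
  sort <=%R (undup [seq p.2 - p.1 | p <- D]).

(* gap number j (0-based, j < n) is { lo j < y - x < hi j }, with a_0 = 0 *)
Definition dlo (D : seq dot) (j : nat) : R :=
  if j is j'.+1 then nth 0 (avals D) j' else 0.
Definition dhi (D : seq dot) (j : nat) : R := nth 0 (avals D) j.
Definition dwidth (D : seq dot) (j : nat) : R := dhi D j - dlo D j.

Definition dbeats (D : seq dot) (i j : nat) : bool :=
  (dwidth D j < dwidth D i) || ((dwidth D i == dwidth D j) && (i < j)%N).

Definition drank (D : seq dot) (j : nat) : nat :=
  count (fun i => dbeats D i j) (iota 0 (size (avals D))).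

Definition dlowest (k : nat) (D : seq dot) : nat :=
  find (fun j => (drank D j < k)%N) (iota 0 (size (avals D))).

(* DS_k : dots above the lowest of the k widest diagonal gaps *)
Definition DS (k : nat) (D : seq dot) : seq dot :=
  [seq p <- D | dlo D (dlowest k D) < p.2 - p.1].

(* extended widths: None = +infinity *)
Definition ext_gt (a b : option R) : bool :=
  match a, b with
  | None, Some _ => true
  | Some x, Some y => y < x
  | _, _ => false
  end.

(* c_1 < ... < c_r : distinct births of DS_k, stored 0-based *)
Definition cvals (k : nat) (D : seq dot) : seq R :=
  sort <=%R (undup [seq p.1 | p <- DS k D]).

(* vertical gap j (0-based, j < r) is { c_j < x < c_{j+1} } (or { x > c_r }) *)
Definition vleft (k : nat) (D : seq dot) (j : nat) : R := nth 0 (cvals k D) j.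
Definition vwidth (k : nat) (D : seq dot) (j : nat) : option R :=
  if (j.+1 < size (cvals k D))%N
  then Some (nth 0 (cvals k D) j.+1 - nth 0 (cvals k D) j) else None.

Definition vbeats (k : nat) (D : seq dot) (i j : nat) : bool :=
  ext_gt (vwidth k D i) (vwidth k D j) ||
  ((vwidth k D i == vwidth k D j) && (i < j)%N).

Definition vrank (k : nat) (D : seq dot) (j : nat) : nat :=
  count (fun i => vbeats k D i j) (iota 0 (size (cvals k D))).

(* |vgap_{k,l}| (l >= 1): width of the l-th widest vertical gap, 0 if none *)
Definition vgap_width (k l : nat) (D : seq dot) : option R :=
  if [seq j <- iota 0 (size (cvals k D)) | vrank k D j == l.-1] is j :: _
  then vwidth k D j else Some 0.

(* "|a| - |b| > t" for extended widths (+infinity minus finite = +infinity) *)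
Definition ext_sub_gt (a b : option R) (t : R) : bool :=
  match a, b with
  | None, Some _ => true
  | Some x, Some y => t < x - y
  | _, _ => false
  end.

Definition vleftmost (k l : nat) (D : seq dot) : nat :=
  find (fun j => (vrank k D j < l)%N) (iota 0 (size (cvals k D))).
Definition vthr (k l : nat) (D : seq dot) : R := vleft k D (vleftmost k l D).

Definition inVS (k l : nat) (D : seq dot) (p : dot) : bool := p.1 <= vthr k l D.
Definition VS (k l : nat) (D : seq dot) : seq dot := [seq p <- DS k D | inVS k l D p].

End PD.

(* Let T be the width of the (l+1)-st widest vertical gap of DS_k(G) (0 if there
   is none).  By the gap hypothesis, every threshold th in [T, T + 4 eps] cuts the
   vertical gaps of G into the l widest ones and the others: exactly l births c of
   DS_k(G) have no birth in (c, c + th], and the threshold of VS_{k,l}(G) is the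
   least of them.  Sending such a birth c to the largest birth of DS_k(C) that is
   at most c + eps is injective and preserves this isolation up to a loss of
   2 eps.  Used in both directions, this shows that T + 2 eps cuts off exactly the
   l widest vertical gaps of C, and that the two thresholds differ by at most eps.
   As the gaps following the thresholds are wider than 2 eps, a birth and its
   eps-close partner lie on the same side of their respective thresholds. *)

From mathcomp Require Import all_boot all_order all_algebra.
From mathcomp Require Import lra.
Set Implicit Arguments. Unset Strict Implicit. Unset Printing Implicit Defensive.
Import Order.TTheory GRing.Theory Num.Theory.
Local Open Scope ring_scope.

Section CountSub.
Variables (T : eqType) (P Q : pred T) (s : seq T).
Hypothesis PQ : {in s, forall x, P x -> Q x}.

Lemma count_filter_sub_in : count P (filter Q s) = count P s.
Proof.
rewrite count_filter; apply: eq_in_count => x xs /=.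
by case Px: (P x); rewrite /= ?(PQ xs Px).
Qed.

Lemma sub_in_count : (count P s <= count Q s)%N.
Proof. by rewrite -count_filter_sub_in -[count Q s]size_filter count_size. Qed.

Lemma sub_in_count_lt :
  (exists2 x, x \in s & Q x && ~~ P x) -> (count P s < count Q s)%N.
Proof.
move=> [x xs /andP[Qx nPx]]; have : (0 < count (predC P) (filter Q s))%N.
  by rewrite -has_count; apply/hasP; exists x; rewrite ?mem_filter ?Qx.
rewrite -count_filter_sub_in -[count Q s]size_filter -(count_predC P (filter Q s)).
by rewrite -{1}[count P _]addn0 ltn_add2l.
Qed.

End CountSub.

Section RankBy.
Variables (beats : rel nat) (r : nat).
Hypothesis beats_irr : irreflexive beats.
Hypothesis beats_trans : transitive beats.
Hypothesis beats_total :
  forall i j, (i < r)%N -> (j < r)%N -> i != j -> beats i j || beats j i.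

Definition rank_by (j : nat) : nat := count (beats^~ j) (iota 0 r).

Lemma rank_by_lt i j : (i < r)%N -> beats i j -> (rank_by i < rank_by j)%N.
Proof.
move=> ir bij; apply: sub_in_count_lt => [x _ bxi|]; first exact: beats_trans bxi bij.
by exists i; rewrite ?mem_iota //= bij beats_irr.
Qed.

Lemma rank_by_leq_nbeats i j :
  (j < r)%N -> (rank_by i <= rank_by j)%N -> ~~ beats j i.
Proof. by move=> jr; apply: contraL => /(rank_by_lt jr); rewrite -ltnNge. Qed.

Lemma rank_by_ltn_size j : (j < r)%N -> (rank_by j < r)%N.
Proof.
move=> jr; rewrite -[X in (_ < X)%N](size_iota 0 r) -count_predT.
apply: sub_in_count_lt => //; exists j; rewrite ?mem_iota //=.
by rewrite beats_irr.
Qed.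

Lemma rank_by_inj i j : (i < r)%N -> (j < r)%N -> rank_by i = rank_by j -> i = j.
Proof.
move=> ir jr eij; apply/eqP; apply: contraT => /(beats_total ir jr) /orP[].
  by move/(rank_by_lt ir); rewrite eij ltnn.
by move/(rank_by_lt jr); rewrite eij ltnn.
Qed.

Lemma perm_rank_by : perm_eq [seq rank_by j | j <- iota 0 r] (iota 0 r).
Proof.
have uniq_ranks : uniq [seq rank_by j | j <- iota 0 r].
  rewrite map_inj_in_uniq ?iota_uniq // => i j.
  by rewrite !mem_iota /= => ir jr; apply: rank_by_inj.
apply: uniq_perm; rewrite ?iota_uniq //.
apply: (uniq_min_size uniq_ranks _ _).2; rewrite ?size_map //.
by move=> m /mapP[j]; rewrite !mem_iota /= => jr ->; apply: rank_by_ltn_size.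
Qed.

Lemma rank_by_surj m : (m < r)%N -> exists2 j, (j < r)%N & rank_by j = m.
Proof.
move=> mr; have : m \in [seq rank_by j | j <- iota 0 r].
  by rewrite (perm_mem perm_rank_by) mem_iota.
by case/mapP => j; rewrite mem_iota => jr ->; exists j.
Qed.

Lemma count_rank_by_lt l :
  (l <= r)%N -> count (fun j => rank_by j < l)%N (iota 0 r) = l.
Proof.
move=> lr; rewrite -[LHS](count_map rank_by (fun m => m < l)%N).
by rewrite (permP perm_rank_by) -size_filter (filter_iota_ltn 0) ?size_iota.
Qed.

Lemma rank_by_lt_count (S : pred nat) :
  (forall i j, (i < r)%N -> (j < r)%N -> S i -> ~~ S j -> beats i j) ->
  forall j, (j < r)%N -> (rank_by j < count S (iota 0 r))%N = S j.
Proof.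
move=> S_beats j jr; case Sj: (S j).
  apply: sub_in_count_lt; last by exists j; rewrite ?mem_iota //= Sj beats_irr.
  move=> i; rewrite mem_iota /= => ir bij; apply: contraTT bij => nSi.
  by apply/negP => /(beats_trans (S_beats _ _ jr ir Sj nSi)); rewrite beats_irr.
apply/negbTE; rewrite -leqNgt; apply: sub_in_count => i; rewrite mem_iota /= => ir Si.
by apply: S_beats; rewrite ?Sj.
Qed.

End RankBy.

Section ExtendedWidths.
Variable R : realFieldType.
Implicit Types (a b c : option R) (x y : R).

Lemma ext_gt_irr : irreflexive (@ext_gt R).
Proof. by case=> [x|] //=; rewrite ltxx. Qed.

Lemma ext_gt_trans : transitive (@ext_gt R).
Proof. by move=> [y|] [x|] [z|] //= yx zy; apply: lt_trans zy yx. Qed.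

Lemma ext_gt_total a b : a != b -> ext_gt a b || ext_gt b a.
Proof.
by case: a b => [x|] [y|] //=; rewrite eqE /= => /negPf xy; case: ltgtP xy.
Qed.

Lemma ext_gt_ge_trans a b c : ext_gt a b -> ~~ ext_gt c b -> ext_gt a c.
Proof.
by case: a b c => [x|] [y|] [z|] //= yx; rewrite -leNgt => zy; apply: le_lt_trans zy yx.
Qed.

Lemma ext_ge_gt_trans a b c : ~~ ext_gt b a -> ext_gt b c -> ext_gt a c.
Proof.
by case: a b c => [x|] [y|] [z|] //=; rewrite -leNgt => yx zy; apply: lt_le_trans zy yx.
Qed.

Lemma ext_gt_SomeW a x y : y <= x -> ext_gt a (Some x) -> ext_gt a (Some y).
Proof. by case: a => [z|] //= yx; apply: le_lt_trans yx. Qed.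

Lemma ext_sub_gt_SomeE a x e : ext_sub_gt a (Some x) e = ext_gt a (Some (x + e)).
Proof. by case: a => [z|] //=; rewrite ltrBrDl addrC. Qed.

End ExtendedWidths.

Definition isolated (R : realFieldType) (th : R) (s : seq R) (c : R) : bool :=
  all (fun b => (b <= c) || (c + th < b)) s.

Section VerticalGaps.
Variables (R : realFieldType) (k : nat) (D : seq (dot R)).
Local Notation cv := (cvals k D).
Local Notation r := (size (cvals k D)).
Local Notation w := (vwidth k D).

Lemma cvals_uniq : uniq cv.
Proof. by rewrite sort_uniq undup_uniq. Qed.

Lemma cvals_sorted : sorted <%R cv.
Proof. by rewrite sort_lt_sorted undup_uniq. Qed.

Lemma mem_cvals b : (b \in cv) = (b \in [seq p.1 | p <- DS k D]).
Proof. by rewrite mem_sort mem_undup. Qed.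

Lemma ltn_nth_cvals i j :
  (i < r)%N -> (j < r)%N -> (i < j)%N -> nth 0 cv i < nth 0 cv j.
Proof. by move=> ir jr ij; rewrite (lt_sorted_ltn_nth 0 cvals_sorted). Qed.

Lemma leq_nth_cvals i j :
  (i < r)%N -> (j < r)%N -> (i <= j)%N -> nth 0 cv i <= nth 0 cv j.
Proof. by move=> ir jr ij; rewrite (lt_sorted_leq_nth 0 cvals_sorted). Qed.

Lemma vwidth_gt0 j (x : R) : w j = Some x -> 0 < x.
Proof.
rewrite /vwidth; case: ifP => // jr [<-].
by rewrite subr_gt0 ltn_nth_cvals // ltnW.
Qed.

Lemma vbeats_irr : irreflexive (vbeats k D).
Proof. by move=> j; rewrite /vbeats ext_gt_irr ltnn andbF. Qed.

Lemma vbeats_trans : transitive (vbeats k D).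
Proof.
move=> j i m; rewrite /vbeats.
move=> /orP[ij|/andP[/eqP wij ij]] /orP[jm|/andP[/eqP wjm jm]].
- by rewrite (ext_gt_trans ij jm).
- by rewrite -wjm ij.
- by rewrite wij jm.
- by rewrite wij wjm eqxx (ltn_trans ij jm) orbT.
Qed.

Lemma vbeats_total i j : i != j -> vbeats k D i j || vbeats k D j i.
Proof.
move=> ij; rewrite /vbeats; have [->|wij] := eqVneq (w i) (w j).
  by rewrite ext_gt_irr /=; case: ltngtP ij.
by case/orP: (ext_gt_total wij) => ->; rewrite ?orbT.
Qed.

Lemma vrankE : vrank k D = rank_by (vbeats k D) r.
Proof. by []. Qed.

Lemma isolated_nth_cvals (th : R) j :
  (j < r)%N -> isolated th cv (nth 0 cv j) = ext_gt (w j) (Some th).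
Proof.
move=> jr; rewrite /vwidth; case: ifP => [j1r|jlast] /=.
  rewrite ltrBrDl; apply/allP/idP => [/(_ _ (mem_nth 0 j1r))|gap].
    by rewrite leNgt ltn_nth_cvals.
  move=> _ /(nthP 0) [m mr <-]; case: (leqP m j) => mj.
    by rewrite leq_nth_cvals.
  by rewrite (lt_le_trans gap) ?orbT // leq_nth_cvals.
apply/allP => _ /(nthP 0) [m mr <-]; rewrite leq_nth_cvals //.
by rewrite -ltnS (leq_trans mr) // leqNgt jlast.
Qed.

Lemma count_isolated_cvals (th : R) :
  count (isolated th cv) cv = count (fun j => ext_gt (w j) (Some th)) (iota 0 r).
Proof.
rewrite -[X in count _ X](mkseq_nth 0 cv) /mkseq count_map.
by apply: eq_in_count => j; rewrite mem_iota => /= jr; rewrite isolated_nth_cvals.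
Qed.

Let vbeats_total_on i j (_ : (i < r)%N) (_ : (j < r)%N) := @vbeats_total i j.

Lemma vrank_ltn_size j : (j < r)%N -> (vrank k D j < r)%N.
Proof. by move=> jr; rewrite vrankE; exact: (rank_by_ltn_size vbeats_irr jr). Qed.

Lemma vrank_surj m : (m < r)%N -> exists2 j, (j < r)%N & vrank k D j = m.
Proof.
move=> mr; rewrite vrankE.
exact: (rank_by_surj vbeats_irr vbeats_trans vbeats_total_on mr).
Qed.

Lemma vrank_inj i j : (i < r)%N -> (j < r)%N -> vrank k D i = vrank k D j -> i = j.
Proof. rewrite vrankE; exact: (rank_by_inj vbeats_irr vbeats_trans vbeats_total_on). Qed.

Lemma vrank_leq_width i j :
  (j < r)%N -> (vrank k D i <= vrank k D j)%N -> ~~ ext_gt (w j) (w i).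
Proof.
rewrite vrankE => jr /(rank_by_leq_nbeats vbeats_irr vbeats_trans jr).
by apply: contra => wji; rewrite /vbeats wji.
Qed.

Lemma vgap_widthE m j : (j < r)%N -> vrank k D j = m -> vgap_width k m.+1 D = w j.
Proof.
move=> jr rj; rewrite /vgap_width /=.
case E: [seq i <- iota 0 r | vrank k D i == m] => [|i s].
  have : j \in [seq i <- iota 0 r | vrank k D i == m].
    by rewrite mem_filter rj eqxx mem_iota.
  by rewrite E.
have : i \in [seq i <- iota 0 r | vrank k D i == m] by rewrite E mem_head.
rewrite mem_filter mem_iota => /andP[/eqP ri ir].
by rewrite (vrank_inj ir jr) // ri rj.
Qed.

Lemma vgap_width_out m : (r <= m)%N -> vgap_width k m.+1 D = Some 0.
Proof.
move=> rm; rewrite /vgap_width /= (@eq_in_filter _ _ pred0) ?filter_pred0 // => j.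
rewrite mem_iota => /= jr; apply/negbTE; rewrite neq_ltn.
by rewrite (leq_trans (vrank_ltn_size jr)).
Qed.

Definition vgap_cut (l : nat) (th : R) : Prop :=
  forall j, (j < r)%N -> ext_gt (w j) (Some th) = (vrank k D j < l)%N.

Lemma count_isolated_vgap_cut l (th : R) :
  (l <= r)%N -> vgap_cut l th -> count (isolated th cv) cv = l.
Proof.
move=> lr cut; rewrite count_isolated_cvals.
rewrite -[RHS](count_rank_by_lt vbeats_irr vbeats_trans vbeats_total_on lr).
by apply: eq_in_count => j; rewrite mem_iota => /= jr; rewrite cut.
Qed.

Lemma vgap_cut_count_isolated (th : R) : vgap_cut (count (isolated th cv) cv) th.
Proof.
move=> j jr; rewrite count_isolated_cvals vrankE.
rewrite (rank_by_lt_count vbeats_irr vbeats_trans) //.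
by move=> i m _ _ wi wm; rewrite /vbeats (ext_gt_ge_trans wi wm).
Qed.

Lemma vthr_least l (th : R) : vgap_cut l th -> (0 < r)%N ->
  [/\ vthr k l D \in cv, isolated th cv (vthr k l D) &
      forall c, c \in cv -> isolated th cv c -> vthr k l D <= c].
Proof.
move=> cut r0; have last_wide : (vrank k D r.-1 < l)%N.
  by rewrite -cut ?prednK // /vwidth prednK // ltnn.
have has_wide : has (fun j => vrank k D j < l)%N (iota 0 r).
  by apply/hasP; exists r.-1; rewrite // mem_iota add0n ltn_predL.
have := has_wide; rewrite has_find size_iota /vthr /vleftmost /vleft.
set j0 := find _ _ => j0r.
have := nth_find 0 has_wide; rewrite -/j0 nth_iota //= => rj0.
split; first exact: mem_nth.
  by rewrite isolated_nth_cvals // cut.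
move=> _ /(nthP 0) [m mr <-]; rewrite isolated_nth_cvals // cut // => rm.
rewrite leq_nth_cvals // leqNgt; apply: contraTN rm => mj0.
by have := before_find 0 mj0; rewrite nth_iota //= => ->.
Qed.

Lemma vgap_threshold l (e : R) : (0 < l)%N -> 0 <= e ->
  ext_sub_gt (vgap_width k l D) (vgap_width k l.+1 D) e ->
  exists T : R, [/\ 0 <= T, (l <= r)%N &
    forall th : R, T <= th -> th <= T + e -> vgap_cut l th].
Proof.
case: l => // l _ e0 hgap.
have lr : (l < r)%N.
  rewrite ltnNge; apply/negP => rl.
  move: hgap; rewrite vgap_width_out // vgap_width_out ?(leq_trans rl) //= subrr.
  by rewrite ltNge e0.
have [j0 j0r rj0] := vrank_surj lr; rewrite (vgap_widthE j0r rj0) in hgap.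
have [T [wT T0 narrow]] : exists T : R, [/\ vgap_width k l.+2 D = Some T, 0 <= T &
    forall j, (j < r)%N -> (l < vrank k D j)%N -> ~~ ext_gt (w j) (Some T)].
  case: (ltnP l.+1 r) => [l1r|rl1].
    have [j1 j1r rj1] := vrank_surj l1r; rewrite (vgap_widthE j1r rj1) in hgap *.
    case wj1: (w j1) hgap => [T|]; last by case: (w j0).
    exists T; split=> // [|j jr rj]; first exact: ltW (vwidth_gt0 wj1).
    by rewrite -wj1 vrank_leq_width // rj1.
  exists 0; split=> [||j jr rj]; rewrite ?vgap_width_out //.
  by have := leq_trans (vrank_ltn_size jr) rl1; rewrite ltnS leqNgt rj.
rewrite wT ext_sub_gt_SomeE in hgap.
exists T; split=> // th Tth thTe j jr; case: ltnP => rj.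
  apply: ext_gt_SomeW thTe _; apply: ext_ge_gt_trans hgap.
  by rewrite vrank_leq_width // rj0 -ltnS.
by apply: contraNF (narrow j jr rj); apply: ext_gt_SomeW.
Qed.

End VerticalGaps.

Lemma bigmax_head_mem (R : realFieldType) (u : seq R) :
  u != [::] -> \big[Num.max/head 0 u]_(y <- u) y \in u.
Proof.
move=> u0; rewrite big_seq; apply: (big_ind (fun m => m \in u)) => // [|x y xu yu].
  by case: u u0 => // y u _; rewrite mem_head.
by case: leP.
Qed.

Section Approximation.
Variables (R : realFieldType) (eps : R).

Definition approx_by (s t : seq R) : Prop :=
  forall b, b \in s -> exists2 c, c \in t & `|c - b| <= eps.

Variables (s t : seq R).
Hypotheses (st : approx_by s t) (ts : approx_by t s).

Definition snap (c : R) : R :=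
  let u := [seq y <- t | y <= c + eps] in \big[Num.max/head 0 u]_(y <- u) y.

Lemma snap_spec (c : R) : c \in s ->
  [/\ snap c \in t, c - eps <= snap c, snap c <= c + eps &
      forall y, y \in t -> y <= c + eps -> y <= snap c].
Proof.
move=> cs; have [y0 y0t] := st cs; rewrite ler_distl => /andP[y0lo y0hi].
have snap_ge y : y \in t -> y <= c + eps -> y <= snap c.
  by move=> yt yc; apply: (le_bigmax_seq _ y); rewrite // mem_filter yc.
have : snap c \in [seq y <- t | y <= c + eps].
  apply: bigmax_head_mem; apply/eqP => u0.
  by have := mem_filter (fun y => y <= c + eps) y0 t; rewrite u0 y0t y0hi.
rewrite mem_filter => /andP[snap_le snap_t]; split => //.
exact: le_trans y0lo (snap_ge _ y0t y0hi).
Qed.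

Lemma isolated_snap (th1 th2 c : R) : th2 + 2 * eps <= th1 ->
  c \in s -> isolated th1 s c -> isolated th2 t (snap c).
Proof.
move=> th12 cs /allP iso_c; have [_ _ snap_hi snap_max] := snap_spec cs.
apply/allP => y yt; case: (lerP y (c + eps)) => yc; first by rewrite snap_max.
have [b bs] := ts yt; rewrite ler_distl => /andP[b_lo b_hi].
by case/orP: (iso_c b bs) => b_c; [exfalso; lra | apply/orP; right; lra].
Qed.

Lemma snap_lt (th c1 c2 : R) : 2 * eps <= th ->
  c1 \in s -> c2 \in s -> isolated th s c1 -> c1 < c2 -> snap c1 < snap c2.
Proof.
move=> th_ge c1s c2s /allP iso_c1 c12; have := iso_c1 c2 c2s.
rewrite leNgt c12 /= => gap.
have [_ _ hi1 _] := snap_spec c1s; have [_ lo2 _ _] := snap_spec c2s; lra.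
Qed.

Lemma count_isolated_snap (th1 th2 : R) :
  0 <= th2 -> th2 + 2 * eps <= th1 -> uniq s ->
  (count (isolated th1 s) s <= count (isolated th2 t) t)%N.
Proof.
move=> th2_ge0 th12 s_uniq; have th1_ge : 2 * eps <= th1 by lra.
have snap_inj : {in [seq c <- s | isolated th1 s c] &, injective snap}.
  move=> c1 c2; rewrite !mem_filter => /andP[iso1 c1s] /andP[iso2 c2s] eq12.
  case: (ltgtP c1 c2) => // [c12|c21].
    by have := snap_lt th1_ge c1s c2s iso1 c12; rewrite eq12 ltxx.
  by have := snap_lt th1_ge c2s c1s iso2 c21; rewrite eq12 ltxx.
rewrite -!size_filter -(size_map snap); apply: uniq_leq_size.
  by rewrite (map_inj_in_uniq snap_inj) filter_uniq.
move=> y /mapP [c]; rewrite mem_filter => /andP[iso_c cs] ->.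
have [snap_t _ _ _] := snap_spec cs.
by rewrite mem_filter snap_t (isolated_snap th12).
Qed.

End Approximation.

Lemma le_isolated_approx (R : realFieldType) (s t : seq R) (eps T x x' a a' : R) :
  0 <= T -> x \in s -> x' \in t -> `|x - x'| <= eps ->
  isolated (T + 4 * eps) s a -> isolated (T + 2 * eps) t a' ->
  a <= a' + eps -> a' <= a + eps -> (x <= a) = (x' <= a').
Proof.
move=> T0 xs x't; rewrite ler_distl => /andP[x_lo x_hi] /allP iso_a /allP iso_a'.
move=> aa' a'a; case: (lerP x a) => xa.
  by case/orP: (iso_a' x' x't) => // gap; exfalso; lra.
case/orP: (iso_a x xs) => [|gap]; first by rewrite leNgt xa.
by apply/esym/negbTE; rewrite -ltNge; lra.
Qed.

Section Diagrams.
Variable R : realFieldType.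
Implicit Types (p q : dot R) (D : seq (dot R)).

Lemma dinfC p q : dinf p q = dinf q p.
Proof. by rewrite /dinf distrC [`|p.2 - _|]distrC. Qed.

Lemma dist_fst_le_dinf p q : `|p.1 - q.1| <= dinf p q.
Proof. by rewrite /dinf le_max lexx. Qed.

Lemma mem_cvals_nth k D i :
  (i < size (DS k D))%N -> (nth (0, 0) (DS k D) i).1 \in cvals k D.
Proof. by move=> iD; rewrite mem_cvals map_f ?mem_nth. Qed.

Lemma approx_cvals k D D' (eps : R) (psi : 'I_(size (DS k D)) -> 'I_(size (DS k D'))) :
  (forall i : 'I_(size (DS k D)),
     dinf (nth (0, 0) (DS k D) i) (nth (0, 0) (DS k D') (psi i)) <= eps) ->
  approx_by eps (cvals k D) (cvals k D').
Proof.
move=> close b; rewrite mem_cvals => /mapP [_ /(nthP (0, 0)) [m mD <-] ->].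
exists (nth (0, 0) (DS k D') (psi (Ordinal mD))).1; first exact: mem_cvals_nth.
by rewrite distrC; apply: le_trans (dist_fst_le_dinf _ _) (close (Ordinal mD)).
Qed.

End Diagrams.

Section Stability.
Variables (R : realFieldType) (k l : nat) (D D' : seq (dot R)) (eps : R).
Hypotheses (DD' : approx_by eps (cvals k D) (cvals k D'))
           (D'D : approx_by eps (cvals k D') (cvals k D)).

Lemma vthr_le_approx (th th' : R) : th' + 2 * eps <= th ->
  vgap_cut k D l th -> vgap_cut k D' l th' -> (0 < size (cvals k D))%N ->
  vthr k l D' <= vthr k l D + eps.
Proof.
move=> th_th' cut cut' r0; have [a_in a_iso _] := vthr_least cut r0.
have [snap_in _ snap_hi _] := snap_spec DD' a_in.
have r'0 : (0 < size (cvals k D'))%N by case: (cvals k D') snap_in.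
have [_ _ least'] := vthr_least cut' r'0.
exact: le_trans (least' _ snap_in (isolated_snap DD' D'D th_th' a_in a_iso)) snap_hi.
Qed.

Lemma vgap_cut_approx (T : R) : 0 <= T -> 0 <= eps -> (l <= size (cvals k D))%N ->
  (forall th : R, T <= th -> th <= T + 4 * eps -> vgap_cut k D l th) ->
  vgap_cut k D' l (T + 2 * eps).
Proof.
move=> T0 eps0 lr cut.
suff <- : count (isolated (T + 2 * eps) (cvals k D')) (cvals k D') = l.
  exact: vgap_cut_count_isolated.
apply/eqP; rewrite eqn_leq; apply/andP; split.
  rewrite -(count_isolated_vgap_cut lr (cut T _ _)) ?lexx //; last by lra.
  by apply: (count_isolated_snap D'D DD'); rewrite ?cvals_uniq //; lra.
rewrite -{1}(count_isolated_vgap_cut lr (cut (T + 4 * eps) _ _)) ?lexx //; last by lra.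
by apply: (count_isolated_snap DD' D'D); rewrite ?cvals_uniq //; lra.
Qed.

End Stability.

Unset Implicit Arguments. Set Strict Implicit.

Theorem mainTheorem13 (R : realFieldType) (DG DC : seq (dot R)) (eps : R)
    (k l : nat)
    (hG : offdiag DG) (hC : offdiag DC) (hk : (0 < k)%N)
    (psi : 'I_(size (DS k DG)) -> 'I_(size (DS k DC)))
    (hpsi : bijective psi)
    (hclose : forall i : 'I_(size (DS k DG)),
        dinf (nth (0, 0) (DS k DG) i) (nth (0, 0) (DS k DC) (psi i)) <= eps)
    (hl : (0 < l)%N)
    (hgap : ext_sub_gt (vgap_width k l DG) (vgap_width k l.+1 DG) (4 * eps)) :
  forall i : 'I_(size (DS k DG)),
    inVS k l DG (nth (0, 0) (DS k DG) i) = inVS k l DC (nth (0, 0) (DS k DC) (psi i)).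
Proof.
move=> i; have [phi _ phiK] := hpsi.
have close := le_trans (dist_fst_le_dinf _ _) (hclose i).
have eps0 : 0 <= eps := le_trans (normr_ge0 _) close.
have GC := approx_cvals hclose.
have CG : approx_by eps (cvals k DC) (cvals k DG).
  by apply: (approx_cvals (psi := phi)) => j; rewrite dinfC -{2}(phiK j).
have [T [T0 lr cutG]] := vgap_threshold hl (mulr_ge0 (ler0n _ 4) eps0) hgap.
have cutC := vgap_cut_approx GC CG T0 eps0 lr cutG.
have cutG' : vgap_cut k DG l (T + 4 * eps) by apply: cutG; lra.
have xG := mem_cvals_nth (ltn_ord i); have xC := mem_cvals_nth (ltn_ord (psi i)).
have rG0 : (0 < size (cvals k DG))%N by case: (cvals k DG) xG.
have rC0 : (0 < size (cvals k DC))%N by case: (cvals k DC) xC.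
have [_ aG _] := vthr_least cutG' rG0; have [_ aC _] := vthr_least cutC rC0.
rewrite /inVS (le_isolated_approx T0 xG xC close aG aC) //.
  by apply: (vthr_le_approx CG GC _ cutC (cutG T _ _) rC0); lra.
by apply: (vthr_le_approx GC CG _ cutG' cutC rG0); lra.
Qed.
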